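(* Let $\|\cdot\|_A$ and $\|\cdot\|_P$ be norms on $\mathbb{R}^n$ such that $\|\cdot\|_A$ is decomposable and $\|\cdot\|_P$ is $\gamma$-decomposable with respect to $\mathcal{G}$ for some $\gamma\in(0,1]$. Let $a,b,c,d$ be the constants defined below, let $f>0$ be a constant such that for every $h\in\mathbb{R}^n$, every $\Lambda_0\in\mathrm{GkS}$ and every optimal group $k$-sparse decomposition $\Lambda_1,\ldots,\Lambda_s$ of $h_{\mathcal{N}\setminus\Lambda_0}$ with respect to $\|\cdot\|_A$ one has $\sum_{j=2}^s\|h_{\Lambda_j}\|_2\le\frac1f\|h_{\mathcal{N}\setminus\Lambda_0}\|_A$, and put $r=b/(a\gamma)$. Let $A\in\mathbb{R}^{m\times n}$ satisfy the group restricted isometry property (GRIP) of order $2k$ with constant $\delta_{2k}\in(0,1)$, and assume the compressibility condition $$\delta_{2k}<\frac{f}{f+\sqrt2\,rd}.$$ Let $x\in\mathbb{R}^n$, $\eta\in\mathbb{R}^m$ with $\|\eta\|_2\le\epsilon$, $y=Ax+\eta$, and let $\hat x$ be a minimizer of $\|z\|_P$ over $z\in\mathbb{R}^n$ subject to $\|y-Az\|_2\le\epsilon$. Then, writing $\sigma=\sigma_{k,\mathcal{G}}(x,\|\cdot\|_A)$, $$\|\hat x-x\|_2\le D_1\sigma+D_2\epsilon,\qquad \|\hat x-x\|_A\le D_3\sigma+D_4\epsilon,$$ where, with $\Delta=1-(1+\sqrt2\,rd/f)\delta_{2k}$, $$D_1=\frac{r(1+\gamma)}{f}\cdot\frac{1+(\sqrt2-1)\delta_{2k}}{\Delta},\qquad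 D_2=2(1+rd/f)\frac{\sqrt{1+\delta_{2k}}}{\Delta},$$ $$D_3=r(1+\gamma)\cdot\frac{1+(\sqrt2\,d/f-1)\delta_{2k}}{\Delta},\qquad D_4=2d(1+r)\frac{\sqrt{1+\delta_{2k}}}{\Delta}.$$
   Context: Fix positive integers $n,k$, $\mathcal{N}=\{1,\ldots,n\}$, and a partition $\mathcal{G}=\{G_1,\ldots,G_g\}$ of $\mathcal{N}$ with $|G_i|\le k$. For $x\in\mathbb{R}^n$, $\Lambda\subseteq\mathcal{N}$: $(x_\Lambda)_i=x_i$ if $i\in\Lambda$, else $0$; $\mathrm{supp}(u)=\{i:u_i\ne0\}$; $G_S=\bigcup_{i\in S}G_i$ for $S\subseteq\{1,\ldots,g\}$. For an integer $t$, $\Lambda$ is group $t$-sparse if $\Lambda=G_S$ for some $S$ and $|\Lambda|\le t$; $\mathrm{GkS}$ is the collection of group $k$-sparse sets. A norm $\|\cdot\|$ is $\gamma$-decomposable w.r.t. $\mathcal{G}$ ($\gamma\in(0,1]$) if $\|u+v\|\ge\|u\|+\gamma\|v\|$ whenever $\mathrm{supp}(u)\subseteq G_{S_u}$, $\mathrm{supp}(v)\subseteq G_{S_v}$ with $S_u\cap S_v=\emptyset$; decomposable means $1$-decomposable (equivalently equality $\|u+v\|=\|u\|+\|v\|$ for such $u,v$). Group $k$-sparsity index: $\sigma_{k,\mathcal{G}}(x,\|\cdot\|)=\min_{\Lambda\in\mathrm{GkS}}\|x-x_\Lambda\|$. Constants (minima/maxima over $\Lambda\in\mathrm{GkS}$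 and $x$ with $x_\Lambda\ne0$): $a=\min\|x_\Lambda\|_P/\|x_\Lambda\|_A$, $b=\max\|x_\Lambda\|_P/\|x_\Lambda\|_A$, $c=\min\|x_\Lambda\|_A/\|x_\Lambda\|_2$, $d=\max\|x_\Lambda\|_A/\|x_\Lambda\|_2$. $A$ satisfies GRIP of order $2k$ with constant $\delta_{2k}\in(0,1)$ if $(1-\delta_{2k})\|z\|_2^2\le\|Az\|_2^2\le(1+\delta_{2k})\|z\|_2^2$ for every $z$ whose support is contained in some group $2k$-sparse set. Optimal group $k$-sparse decomposition of $v=h_{\mathcal{N}\setminus\Lambda_0}$ ($\Lambda_0\in\mathrm{GkS}$) w.r.t. $\|\cdot\|_A$: pairwise disjoint group $k$-sparse sets $\Lambda_1,\ldots,\Lambda_s\subseteq\mathcal{N}\setminus\Lambda_0$ with union $\mathcal{N}\setminus\Lambda_0$, such that for each $i$, with $r_i=v-\sum_{j<i}v_{\Lambda_j}$, $\Lambda_i$ minimizes $\|r_i-(r_i)_\Lambda\|_A$ over group $k$-sparse $\Lambda\subseteq\mathcal{N}\setminus(\Lambda_0\cup\cdots\cup\Lambda_{i-1})$. *)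

From HB Require Import structures.
From mathcomp Require Import all_boot all_order all_algebra.
From mathcomp Require Import reals.
Set Implicit Arguments. Unset Strict Implicit. Unset Printing Implicit Defensive.
Import Order.TTheory GRing.Theory Num.Theory.
Local Open Scope ring_scope.

Definition norm2 (R : realType) (p : nat) (x : 'cV[R]_p) : R :=
  Num.sqrt (\sum_i (x i ord0) ^+ 2).

Section GroupSparse.
Variables (R : realType) (n : nat).
Implicit Types (x u v : 'cV[R]_n) (L : {set 'I_n}) (P S : {set {set 'I_n}}).

Definition restrict x L : 'cV[R]_n := \col_i (if i \in L then x i ord0 else 0).

Definition supp x : {set 'I_n} := [set i | x i ord0 != 0].


Definition is_norm (N : 'cV[R]_n -> R) : Prop :=
  [/\ forall x, N x = 0 -> x = 0,
      forall (a : R) x, N (a *: x) = `|a| * N x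
    & forall x u, N (x + u) <= N x + N u].

Definition gsparse P (t : nat) L : bool :=
  [exists S : {set {set 'I_n}}, (S \subset P) && (L == cover S)] && (#|L| <= t)%N.

Definition gdecomposable P (gamma : R) (N : 'cV[R]_n -> R) : Prop :=
  forall u v (Su Sv : {set {set 'I_n}}),
    Su \subset P -> Sv \subset P -> [disjoint Su & Sv] ->
    supp u \subset cover Su -> supp v \subset cover Sv ->
    N u + gamma * N v <= N (u + v).

Definition decomposable P N := gdecomposable P 1 N.

(* group k-sparsity index sigma_{k,G}(x, N) = min_{Lambda in GkS} N(x - x_Lambda);
   the empty set is in GkS and gives N x, so it is used as initial value. *)
Definition sigma_idx P (k : nat) (N : 'cV[R]_n -> R) x : R :=
  \big[Order.min/N x]_(L : {set 'I_n} | gsparse P k L) N (x - restrict x L).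

Definition is_min_ratio P k (N1 N2 : 'cV[R]_n -> R) (v : R) : Prop :=
  (exists L x, gsparse P k L /\ restrict x L <> 0 /\
     v = N1 (restrict x L) / N2 (restrict x L)) /\
  (forall L x, gsparse P k L -> restrict x L <> 0 ->
     v <= N1 (restrict x L) / N2 (restrict x L)).

Definition is_max_ratio P k (N1 N2 : 'cV[R]_n -> R) (v : R) : Prop :=
  (exists L x, gsparse P k L /\ restrict x L <> 0 /\
     v = N1 (restrict x L) / N2 (restrict x L)) /\
  (forall L x, gsparse P k L -> restrict x L <> 0 ->
     N1 (restrict x L) / N2 (restrict x L) <= v).

(* Optimal group k-sparse decomposition of v = h_{N \ L0} w.r.t. NA.
   Ls = [:: Lambda_1; ...; Lambda_s] (0-based in the list). The residual
   r_{i+1} = v - sum_{j<i} v_{Lambda_{j+1}} (0-based i). *)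
Definition residual h L0 (Ls : seq {set 'I_n}) (i : nat) : 'cV[R]_n :=
  restrict h (~: L0) - \sum_(j < i) restrict (restrict h (~: L0)) (nth set0 Ls j).

Definition opt_decomp P (k : nat) (NA : 'cV[R]_n -> R) h L0
    (Ls : seq {set 'I_n}) : Prop :=
  [/\ forall i, (i < size Ls)%N -> gsparse P k (nth set0 Ls i) /\
                                  nth set0 Ls i \subset ~: L0,
      forall i j, (i < size Ls)%N -> (j < size Ls)%N -> i <> j ->
                  [disjoint nth set0 Ls i & nth set0 Ls j],
      \bigcup_(L <- Ls) L = ~: L0
    & forall i, (i < size Ls)%N -> forall L, gsparse P k L ->
        L \subset ~: (L0 :|: \bigcup_(j < i) nth set0 Ls j) ->
        NA (residual h L0 Ls i - restrict (residual h L0 Ls i) (nth set0 Ls i))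
          <= NA (residual h L0 Ls i - restrict (residual h L0 Ls i) L)].

Definition GRIP P (t : nat) m (A : 'M[R]_(m, n)) (delta : R) : Prop :=
  forall z : 'cV[R]_n, (exists L, gsparse P t L /\ supp z \subset L) ->
    (1 - delta) * norm2 z ^+ 2 <= norm2 (A *m z) ^+ 2 /\
    norm2 (A *m z) ^+ 2 <= (1 + delta) * norm2 z ^+ 2.

End GroupSparse.

From HB Require Import structures.
From mathcomp Require Import all_boot all_order all_algebra.
From mathcomp Require Import reals.
From mathcomp Require Import ring lra zify.
Import Order.TTheory GRing.Theory Num.Theory.
Local Open Scope ring_scope.

Set Implicit Arguments. Unset Strict Implicit. Unset Printing Implicit Defensive.

(* Let h = xh - x, let L0 attain sigma, and let L1, L2, ... be an optimal
   decomposition of h off L0 (one is built greedily); put T = L0 :|: L1.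
   Minimality of NP xh and gamma-decomposability of NP give the cone constraint
   NA h_{~L0} <= r NA h_{L0} + r (1 + gamma) sigma.  The GRIP, applied to h_T
   and, by polarization, to the pairs (h_{L0}, h_{Lj}) and (h_{L1}, h_{Lj}),
   bounds (1 - delta) |h_T| by 2 eps sqrt(1 + delta) + sqrt 2 delta times the
   tail sum, which is at most NA h_{~L0} / f by the choice of f; finally
   NA h_{L0} <= d |h_T|.  Solving these linear inequalities bounds |h_T| and
   the tail, hence |h| and NA h. *)

Section Dotp.
Variables (R : realType) (p : nat).
Implicit Types (u v w : 'cV[R]_p).

Definition dotp u v : R := \sum_i u i ord0 * v i ord0.

Lemma dotpC u v : dotp u v = dotp v u.
Proof. by apply: eq_bigr => i _; rewrite mulrC. Qed.

Lemma dotpDr u v w : dotp u (v + w) = dotp u v + dotp u w.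
Proof. by rewrite /dotp -big_split; apply: eq_bigr => i _; rewrite mxE mulrDr. Qed.

Lemma dotpDl u v w : dotp (v + w) u = dotp v u + dotp w u.
Proof. by rewrite dotpC dotpDr !(dotpC u). Qed.

Lemma dotp0r u : dotp u 0 = 0.
Proof. by rewrite /dotp big1 // => i _; rewrite mxE mulr0. Qed.

Lemma dotpNr u v : dotp u (- v) = - dotp u v.
Proof. by rewrite /dotp -sumrN; apply: eq_bigr => i _; rewrite mxE mulrN. Qed.

Lemma dotpZr u v s : dotp u (s *: v) = s * dotp u v.
Proof. by rewrite /dotp mulr_sumr; apply: eq_bigr => i _; rewrite mxE mulrCA. Qed.

Lemma dotpZl u v s : dotp (s *: v) u = s * dotp v u.
Proof. by rewrite dotpC dotpZr dotpC. Qed.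

Lemma dotp_sumr u I (r : seq I) (Q : pred I) (F : I -> 'cV[R]_p) :
  dotp u (\sum_(j <- r | Q j) F j) = \sum_(j <- r | Q j) dotp u (F j).
Proof. exact: (big_morph (dotp u) (dotpDr u) (dotp0r u)). Qed.

Lemma dotp_ge0 u : 0 <= dotp u u.
Proof. by apply: sumr_ge0 => i _; rewrite -expr2 sqr_ge0. Qed.

Lemma norm2E u : norm2 u = Num.sqrt (dotp u u).
Proof. by congr Num.sqrt; apply: eq_bigr => i _; rewrite expr2. Qed.

Lemma norm2_ge0 u : 0 <= norm2 u.
Proof. exact: sqrtr_ge0. Qed.

Lemma norm2_sq u : norm2 u ^+ 2 = dotp u u.
Proof. by rewrite norm2E sqr_sqrtr // dotp_ge0. Qed.

Lemma norm2_eq0 u : norm2 u = 0 -> u = 0.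
Proof.
move=> u0; apply/matrixP => i j; rewrite ord1 mxE.
have uu0 : dotp u u = 0 by rewrite -norm2_sq u0 expr0n.
have : u i ord0 * u i ord0 = 0.
  by apply: (psumr_eq0P _ uu0) => // l _; rewrite -expr2 sqr_ge0.
by move/eqP; rewrite mulf_eq0 orbb => /eqP.
Qed.

Lemma norm2_0 : norm2 (0 : 'cV[R]_p) = 0.
Proof. by rewrite norm2E dotp0r sqrtr0. Qed.

Lemma norm2_gt0 u : u != 0 -> 0 < norm2 u.
Proof.
by move=> u0; rewrite lt0r norm2_ge0 andbT; apply: contra_neq u0; apply: norm2_eq0.
Qed.

Lemma norm2Z s u : norm2 (s *: u) = `|s| * norm2 u.
Proof.
by rewrite !norm2E dotpZl dotpZr mulrA -expr2 sqrtrM ?sqr_ge0 // sqrtr_sqr.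
Qed.

Lemma cauchy_schwarz u v : dotp u v <= norm2 u * norm2 v.
Proof.
have [->|u0] := eqVneq u 0; first by rewrite dotpC dotp0r norm2_0 mul0r.
have [->|v0] := eqVneq v 0; first by rewrite dotp0r norm2_0 mulr0.
have UV0 : 0 < norm2 u * norm2 v by rewrite mulr_gt0 ?norm2_gt0.
have := dotp_ge0 (norm2 v *: u - norm2 u *: v).
rewrite dotpDl !dotpDr !dotpNr -!scaleNr !dotpZl !dotpZr (dotpC v u) -!norm2_sq.
move: UV0; set U := norm2 u; set V := norm2 v; move=> UV0 H; nra.
Qed.

Lemma ler_norm2D u v : norm2 (u + v) <= norm2 u + norm2 v.
Proof.
rewrite [norm2 (u + v)]norm2E -(ger0_norm (addr_ge0 (norm2_ge0 u) (norm2_ge0 v))).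
rewrite -sqrtr_sqr ler_sqrt ?sqr_ge0 // dotpDl !dotpDr (dotpC v u) sqrrD !norm2_sq.
have := cauchy_schwarz u v; lra.
Qed.

Lemma norm2_is_norm : is_norm (@norm2 R p).
Proof. by split; [exact: norm2_eq0 | exact: norm2Z | exact: ler_norm2D]. Qed.

End Dotp.

Section IsNorm.
Variables (R : realType) (n : nat) (N : 'cV[R]_n -> R).
Hypothesis hN : is_norm N.

Lemma is_norm0 : N 0 = 0.
Proof. by case: hN => _ hZ _; rewrite -(scale0r (0 : 'cV[R]_n)) hZ normr0 mul0r. Qed.

Lemma is_normN u : N (- u) = N u.
Proof. by case: hN => _ hZ _; rewrite -scaleN1r hZ normrN normr1 mul1r. Qed.

Lemma is_normD u v : N (u + v) <= N u + N v.
Proof. by case: hN. Qed.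

Lemma is_norm_ge0 u : 0 <= N u.
Proof. by have := is_normD u (- u); rewrite subrr is_norm0 is_normN; lra. Qed.

Lemma is_norm_gt0 u : u != 0 -> 0 < N u.
Proof.
move=> u0; rewrite lt0r is_norm_ge0 andbT; apply: contra_neq u0.
by case: hN => hN0 _ _; apply: hN0.
Qed.

Lemma is_norm_sum I (r : seq I) (Q : pred I) (F : I -> 'cV[R]_n) :
  N (\sum_(j <- r | Q j) F j) <= \sum_(j <- r | Q j) N (F j).
Proof.
elim: r => [|j r IH]; first by rewrite !big_nil is_norm0.
rewrite !big_cons; case: (Q j) => //.
by apply: le_trans (is_normD _ _) _; rewrite lerD2l.
Qed.

End IsNorm.

Section Restrict.
Variables (R : realType) (n : nat).
Implicit Types (u v z : 'cV[R]_n) (L A B : {set 'I_n}).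

Lemma restrictD u v L : restrict (u + v) L = restrict u L + restrict v L.
Proof. by apply/matrixP => i j; rewrite !mxE; case: (i \in L); rewrite ?addr0. Qed.

Lemma restrictN u L : restrict (- u) L = - restrict u L.
Proof. by apply/matrixP => i j; rewrite !mxE; case: (i \in L); rewrite ?oppr0. Qed.

Lemma restrictB u v L : restrict (u - v) L = restrict u L - restrict v L.
Proof. by rewrite restrictD restrictN. Qed.

Lemma restrict_set0 u : restrict u set0 = 0.
Proof. by apply/matrixP => i j; rewrite !mxE inE. Qed.

Lemma restrictT u : restrict u setT = u.
Proof. by apply/matrixP => i j; rewrite !mxE inE (ord1 j). Qed.

Lemma restrict_addC u L : restrict u L + restrict u (~: L) = u.
Proof.
apply/matrixP => i j; rewrite !mxE inE (ord1 j).
by case: (i \in L); rewrite /= ?addr0 ?add0r.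
Qed.

Lemma subr_restrict u L : u - restrict u L = restrict u (~: L).
Proof. by rewrite -{1}(restrict_addC u L) addrAC subrr add0r. Qed.

Lemma restrictU u A B : [disjoint A & B] ->
  restrict u (A :|: B) = restrict u A + restrict u B.
Proof.
move=> AB; apply/matrixP => i j; rewrite !mxE inE.
case iA: (i \in A); case iB: (i \in B); rewrite /= ?addr0 ?add0r //.
by move: AB => /disjoint_setI0/setP/(_ i); rewrite !inE iA iB.
Qed.

Lemma restrict_bigcup u s (F : nat -> {set 'I_n}) :
  (forall i j, (i < s)%N -> (j < s)%N -> i <> j -> [disjoint F i & F j]) ->
  restrict u (\bigcup_(j < s) F j) = \sum_(j < s) restrict u (F j).
Proof.
elim: s => [|s IH] dF; first by rewrite !big_ord0 restrict_set0.
rewrite !big_ord_recr /= restrictU ?IH //; first by move=> i j *; apply: dF; lia.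
rewrite disjoint_sym; apply: bigcup_disjoint => i _.
by have := ltn_ord i => ?; apply: dF => //; lia.
Qed.

Lemma supp0 : supp (0 : 'cV[R]_n) = set0.
Proof. by apply/setP => i; rewrite !inE mxE eqxx. Qed.

Lemma suppD u v : supp (u + v) \subset supp u :|: supp v.
Proof.
apply/subsetP => i; rewrite !inE mxE; apply: contraR; rewrite negb_or !negbK.
by move=> /andP [/eqP -> /eqP ->]; rewrite addr0.
Qed.

Lemma supp_restrict u L : supp (restrict u L) \subset L.
Proof. by apply/subsetP => i; rewrite inE mxE; case: (i \in L); rewrite ?eqxx. Qed.

Lemma dotp_restrict_disjoint u v A B :
  [disjoint A & B] -> dotp (restrict u A) (restrict v B) = 0.
Proof.
move=> AB; rewrite /dotp big1 // => i _; rewrite !mxE.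
case iA: (i \in A); case iB: (i \in B); rewrite ?mulr0 ?mul0r //.
by move: AB => /disjoint_setI0/setP/(_ i); rewrite !inE iA iB.
Qed.

Lemma norm2_restrictU u A B : [disjoint A & B] ->
  norm2 (restrict u (A :|: B)) ^+ 2 =
    norm2 (restrict u A) ^+ 2 + norm2 (restrict u B) ^+ 2.
Proof.
move=> AB; have BA : [disjoint B & A] by rewrite disjoint_sym.
rewrite restrictU // !norm2_sq dotpDl !dotpDr.
by rewrite (dotp_restrict_disjoint _ _ AB) (dotp_restrict_disjoint _ _ BA) add0r addr0.
Qed.

Lemma norm2_restrict_le u L L' :
  L \subset L' -> norm2 (restrict u L) <= norm2 (restrict u L').
Proof.
move=> LL'; rewrite /norm2 ler_sqrt ?sumr_ge0 // => [|i _]; last exact: sqr_ge0.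
apply: ler_sum => i _; rewrite !mxE; case: ifP => iL; first by rewrite (subsetP LL' i iL).
by rewrite expr0n sqr_ge0.
Qed.

End Restrict.

Section Partition.
Variables (n : nat) (P : {set {set 'I_n}}).
Implicit Types (L : {set 'I_n}) (S : {set {set 'I_n}}).

Lemma gsparse_cover t L :
  gsparse P t L -> exists2 S : {set {set 'I_n}}, S \subset P & L = cover S.
Proof. by case/andP => /existsP [S /andP [SP /eqP ->]] _; exists S. Qed.

Lemma gsparse0 t : gsparse P t set0.
Proof.
rewrite /gsparse cards0 andbT; apply/existsP; exists set0.
by rewrite sub0set /cover big_set0 eqxx.
Qed.

Lemma gsparse_block t G : G \in P -> (#|G| <= t)%N -> gsparse P t G.
Proof.
move=> GP Gt; rewrite /gsparse Gt andbT; apply/existsP; exists [set G].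
by rewrite sub1set GP cover1 eqxx.
Qed.

Lemma gsparseU t L L' : gsparse P t L -> gsparse P t L' -> gsparse P (2 * t) (L :|: L').
Proof.
move=> sL sL'; apply/andP; split; last first.
  by move: sL sL' => /andP [_ +] /andP [_ +]; rewrite cardsU; lia.
have [S SP ->] := gsparse_cover sL; have [S' S'P ->] := gsparse_cover sL'.
apply/existsP; exists (S :|: S'); rewrite subUset SP S'P /=.
by rewrite /cover bigcup_setU.
Qed.

Definition block_closed L :=
  forall G i j, G \in P -> i \in G -> j \in G -> i \in L -> j \in L.

Lemma block_closedC L : block_closed L -> block_closed (~: L).
Proof. by move=> cL G i j GP iG jG; rewrite !inE; apply: contra; apply: cL jG iG. Qed.

Lemma block_closedU L L' : block_closed L -> block_closed L' -> block_closed (L :|: L').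
Proof.
move=> cL cL' G i j GP iG jG; rewrite !inE => /orP [iL|iL'].
  by rewrite (cL G i j).
by rewrite (cL' G i j) ?orbT.
Qed.

Lemma block_closed_bigcup s (F : nat -> {set 'I_n}) :
  (forall j, (j < s)%N -> block_closed (F j)) -> block_closed (\bigcup_(j < s) F j).
Proof.
move=> cF G i j' GP iG jG /bigcupP [j _ iF]; apply/bigcupP; exists j => //.
exact: (cF j (ltn_ord j) G i).
Qed.

Hypothesis hP : partition P [set: 'I_n].

Lemma pblockP i : pblock P i \in P /\ i \in pblock P i.
Proof.
have iP : i \in cover P by rewrite (cover_partition hP) inE.
by rewrite pblock_mem // mem_pblock.
Qed.

Lemma partition_block_eq G B i : G \in P -> B \in P -> i \in G -> i \in B -> G = B.
Proof.
move=> GP BP iG iB; apply/eqP; apply: contraT => GB.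
have := trivIsetP (partition_trivIset hP) G B GP BP GB.
by move/disjoint_setI0/setP/(_ i); rewrite !inE iG iB.
Qed.

Lemma block_closed_cover S : S \subset P -> block_closed (cover S).
Proof.
move=> SP G i j GP iG jG /bigcupP [B BS iB].
rewrite (partition_block_eq GP (subsetP SP _ BS) iG iB) in jG.
by apply/bigcupP; exists B.
Qed.

Lemma pblock_sub_block_closed L i : block_closed L -> i \in L -> pblock P i \subset L.
Proof.
move=> cL iL; have [iP iB] := pblockP i.
by apply/subsetP => j jB; apply: (cL _ i j iP).
Qed.

Lemma setC_cover S : S \subset P -> ~: cover S = cover (P :\: S).
Proof.
move=> SP; apply/setP => i; rewrite inE; have [iP iB] := pblockP i.
apply/idP/idP => [iS|/bigcupP [B]].
  apply/bigcupP; exists (pblock P i) => //; rewrite inE iP andbT.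
  by apply: contra iS => BS; apply/bigcupP; exists (pblock P i).
rewrite inE => /andP [BS BP] iB'; apply/bigcupP => [[B' B'S iB'']].
by move: BS; rewrite (partition_block_eq BP (subsetP SP _ B'S) iB' iB'') B'S.
Qed.

Lemma gsparse_block_closed t L : gsparse P t L -> block_closed L.
Proof. by move/gsparse_cover => [S SP ->]; apply: block_closed_cover. Qed.

End Partition.

Section GroupSums.
Variables (R : realType) (n : nat) (P : {set {set 'I_n}}).
Implicit Types (u z : 'cV[R]_n) (S : {set {set 'I_n}}).

Lemma supp_sum_restrict z (s : seq {set 'I_n}) :
  supp (\sum_(G <- s) restrict z G) \subset cover [set G | G \in s].
Proof.
apply/subsetP => i; rewrite inE summxE; apply: contraR => iS.
apply/eqP; rewrite big1_seq // => G Gs; rewrite mxE; case: ifP => // iG.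
by case/negP: iS; apply/bigcupP; exists G; rewrite ?inE.
Qed.

Lemma gdecomposable_sum (N : 'cV[R]_n -> R) g z u0 S0 :
  gdecomposable P g N -> S0 \subset P -> supp u0 \subset cover S0 ->
  forall s, uniq s -> {subset s <= P :\: S0} ->
  N u0 + g * \sum_(G <- s) N (restrict z G) <= N (u0 + \sum_(G <- s) restrict z G).
Proof.
move=> decN S0P u0S0; elim => [|G s IH]; first by rewrite !big_nil mulr0 !addr0.
rewrite /= => /andP [Gs us] sP.
have /setDP [GP GS0] := sP G (mem_head G s).
have sP' : {subset s <= P :\: S0} by move=> B Bs; apply: sP; rewrite inE Bs orbT.
rewrite !big_cons [restrict z G + _]addrC addrA.
set S1 := S0 :|: [set B | B \in s].
have S1P : S1 \subset P.
  by rewrite subUset S0P; apply/subsetP => B; rewrite inE => /sP' /setDP [].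
have S1G : [disjoint S1 & [set G]].
  by rewrite disjoint_sym disjoints1 !inE negb_or Gs andbT.
have suppS1 : supp (u0 + \sum_(B <- s) restrict z B) \subset cover S1.
  rewrite /cover bigcup_setU; apply: subset_trans (suppD _ _) _.
  by apply: setUSS => //; apply: supp_sum_restrict.
have := decN _ (restrict z G) _ [set G] S1P _ S1G suppS1.
rewrite sub1set GP cover1 supp_restrict => /(_ isT isT).
by have := IH us sP'; rewrite mulrDr; lra.
Qed.

Hypothesis hP : partition P [set: 'I_n].

Lemma sum_restrict_blocks z S : S \subset P ->
  \sum_(G in S) restrict z G = restrict z (cover S).
Proof.
move=> SP; apply/matrixP => i j; rewrite summxE (ord1 j) [RHS]mxE.
have [iP iB] := pblockP hP i.
have blockE (G : {set 'I_n}) : G \in S -> i \in G -> G = pblock P i.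
  by move=> GS iG; have := partition_block_eq hP (subsetP SP _ GS) iP iG iB.
case: ifPn => [/bigcupP [B BS iB'] | iS].
  rewrite (bigD1 B) //= mxE iB' big1 ?addr0 // => G /andP [GS GB].
  by rewrite mxE; case: ifP => // iG; move: GB; rewrite (blockE G) // (blockE B) ?eqxx.
rewrite big1 // => G GS; rewrite mxE; case: ifP => // iG.
by case/bigcupP: iS; exists G.
Qed.

Lemma sum_restrict_partition z : \sum_(G in P) restrict z G = z.
Proof. by rewrite sum_restrict_blocks // (cover_partition hP) restrictT. Qed.

Lemma decomposable_sum_blocks (N : 'cV[R]_n -> R) z :
  is_norm N -> decomposable P N -> N z = \sum_(G in P) N (restrict z G).
Proof.
move=> hN decN; apply/eqP; rewrite eq_le -{1}(sum_restrict_partition z) is_norm_sum //=.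
have sP : {subset enum (mem P) <= P :\: set0} by move=> G; rewrite mem_enum setD0.
have supp00 : supp (0 : 'cV[R]_n) \subset cover set0 by rewrite supp0 sub0set.
have := gdecomposable_sum z decN (sub0set P) supp00 (enum_uniq (mem P)) sP.
by rewrite mul1r !big_enum add0r sum_restrict_partition is_norm0 // add0r.
Qed.

Lemma gdecomposable_restrictC_le (N : 'cV[R]_n -> R) g u S :
  is_norm N -> 0 <= g -> gdecomposable P g N -> S \subset P ->
  N (restrict u (~: cover S)) <= N u.
Proof.
move=> hN g0 decN SP.
have dis : [disjoint P :\: S & S].
  by rewrite disjoints_subset; apply/subsetP => B; rewrite !inE => /andP [].
have suppC : supp (restrict u (~: cover S)) \subset cover (P :\: S).
  by rewrite -setC_cover // supp_restrict.
have := decN _ (restrict u (cover S)) _ _ (subsetDl P S) SP dis suppC (supp_restrict u _).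
rewrite [restrict u (~: _) + _]addrC restrict_addC.
by have := mulr_ge0 g0 (is_norm_ge0 hN (restrict u (cover S))); lra.
Qed.

End GroupSums.

Section Ratio.
Variables (R : realType) (n k : nat) (P : {set {set 'I_n}}).
Variables (N1 N2 : 'cV[R]_n -> R) (v : R).
Hypotheses (hN1 : is_norm N1) (hN2 : is_norm N2).

Lemma max_ratio_le z L : is_max_ratio P k N1 N2 v -> gsparse P k L ->
  N1 (restrict z L) <= v * N2 (restrict z L).
Proof.
move=> [_ maxv] sL; have [->|z0] := eqVneq (restrict z L) 0.
  by rewrite is_norm0 // is_norm0 // mulr0.
by rewrite -ler_pdivrMr ?is_norm_gt0 //; apply: maxv => //; apply/eqP.
Qed.

Lemma min_ratio_ge z L : is_min_ratio P k N1 N2 v -> gsparse P k L ->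
  v * N2 (restrict z L) <= N1 (restrict z L).
Proof.
move=> [_ minv] sL; have [->|z0] := eqVneq (restrict z L) 0.
  by rewrite is_norm0 // is_norm0 // mulr0.
by rewrite -ler_pdivlMr ?is_norm_gt0 //; apply: minv => //; apply/eqP.
Qed.

Lemma min_ratio_gt0 : is_min_ratio P k N1 N2 v -> 0 < v.
Proof. by move=> [[L [z [_ [/eqP z0 ->]]]] _]; rewrite divr_gt0 ?is_norm_gt0. Qed.

Lemma max_ratio_gt0 : is_max_ratio P k N1 N2 v -> 0 < v.
Proof. by move=> [[L [z [_ [/eqP z0 ->]]]] _]; rewrite divr_gt0 ?is_norm_gt0. Qed.

Lemma min_ratio_le_max_ratio w :
  is_min_ratio P k N1 N2 v -> is_max_ratio P k N1 N2 w -> v <= w.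
Proof. by move=> [[L [z [sL [z0 ->]]]] _] [_ maxw]; apply: maxw. Qed.

Hypothesis hP : partition P [set: 'I_n].
Hypothesis hPk : forall B, B \in P -> (#|B| <= k)%N.

Lemma max_ratio_le_decomposable (z : 'cV[R]_n) :
  is_max_ratio P k N1 N2 v -> decomposable P N2 -> N1 z <= v * N2 z.
Proof.
move=> maxv decN2; rewrite (decomposable_sum_blocks hP z hN2 decN2) mulr_sumr.
rewrite -{1}(sum_restrict_partition hP z); apply: le_trans (is_norm_sum hN1 _ _ _) _.
by apply: ler_sum => G GP; apply: max_ratio_le maxv (gsparse_block GP (hPk GP)).
Qed.

Lemma min_ratio_gdecomposable g (z : 'cV[R]_n) (S : {set {set 'I_n}}) :
  is_min_ratio P k N1 N2 v -> 0 <= g -> gdecomposable P g N1 -> S \subset P ->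
  N1 (restrict z (cover S)) + g * v * N2 (restrict z (~: cover S)) <= N1 z.
Proof.
move=> minv g0 decN1 SP.
have sP : {subset enum (mem (P :\: S)) <= P :\: S} by move=> G; rewrite mem_enum.
have := gdecomposable_sum z decN1 SP (supp_restrict z _) (enum_uniq _) sP.
rewrite !big_enum (sum_restrict_blocks hP z (subsetDl P S)).
rewrite -(setC_cover hP SP) restrict_addC.
apply: le_trans; rewrite lerD2l -mulrA ler_wpM2l //.
rewrite (setC_cover hP SP) -(sum_restrict_blocks hP z (subsetDl P S)).
apply: le_trans (ler_wpM2l (ltW (min_ratio_gt0 minv)) (is_norm_sum hN2 _ _ _)) _.
rewrite mulr_sumr; apply: ler_sum => G /setDP [GP _].
exact: min_ratio_ge minv (gsparse_block GP (hPk GP)).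
Qed.

End Ratio.

Section OptimalDecomposition.
Variables (R : realType) (n k : nat) (P : {set {set 'I_n}}).
Hypothesis hP : partition P [set: 'I_n].
Hypothesis hPk : forall B, B \in P -> (#|B| <= k)%N.
Variable NA : 'cV[R]_n -> R.
Hypothesis hNA : is_norm NA.
Hypothesis hdecA : decomposable P NA.

Lemma greedy_choice (r : 'cV[R]_n) U : block_closed P U -> U != set0 ->
  exists2 L, [&& gsparse P k L, L \subset U & L != set0] &
    forall L', gsparse P k L' -> L' \subset U ->
      NA (r - restrict r L) <= NA (r - restrict r L').
Proof.
move=> cU /set0Pn [i iU].
pose C L := gsparse P k L && (L \subset U).
have C0 : C set0 by rewrite /C gsparse0 sub0set.
case: (arg_minP (fun L => NA (r - restrict r L)) C0) => L /andP [sL LU] minL.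
have minC L' : gsparse P k L' -> L' \subset U ->
    NA (r - restrict r L) <= NA (r - restrict r L').
  by move=> sL' L'U; apply: minL; rewrite /C sL'.
have [L0|Ln0] := eqVneq L set0; last by exists L => //; rewrite sL LU.
(* [set0] is a candidate; if it is optimal, a single block is as good, since
   removing a block cannot increase a decomposable norm. *)
have [iP iB] := pblockP hP i.
exists (pblock P i).
  rewrite gsparse_block ?hPk // pblock_sub_block_closed //=.
  by apply/set0Pn; exists i.
move=> L' sL' L'U; apply: le_trans (minC L' sL' L'U).
rewrite L0 restrict_set0 subr0 subr_restrict -(cover1 (pblock P i)).
by apply: (gdecomposable_restrictC_le hP _ hNA ler01 hdecA); rewrite sub1set.
Qed.

Variables (h : 'cV[R]_n) (L0 : {set 'I_n}).
Hypothesis hL0 : gsparse P k L0.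

Definition opt_prefix (Ls : seq {set 'I_n}) :=
  [/\ forall i, (i < size Ls)%N -> gsparse P k (nth set0 Ls i) /\
                                  nth set0 Ls i \subset ~: L0,
      forall i j, (i < size Ls)%N -> (j < size Ls)%N -> i <> j ->
                  [disjoint nth set0 Ls i & nth set0 Ls j]
    & forall i, (i < size Ls)%N -> forall L, gsparse P k L ->
        L \subset ~: (L0 :|: \bigcup_(j < i) nth set0 Ls j) ->
        NA (residual h L0 Ls i - restrict (residual h L0 Ls i) (nth set0 Ls i))
          <= NA (residual h L0 Ls i - restrict (residual h L0 Ls i) L)].

Definition uncovered (Ls : seq {set 'I_n}) :=
  ~: (L0 :|: \bigcup_(j < size Ls) nth set0 Ls j).

Lemma bigcup_rcons (Ls : seq {set 'I_n}) L i : (i <= size Ls)%N ->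
  \bigcup_(j < i) nth set0 (rcons Ls L) j = \bigcup_(j < i) nth set0 Ls j.
Proof.
by move=> iLs; apply: eq_bigr => j _; rewrite nth_rcons (leq_trans (ltn_ord j)).
Qed.

Lemma residual_rcons (Ls : seq {set 'I_n}) L i : (i <= size Ls)%N ->
  residual h L0 (rcons Ls L) i = residual h L0 Ls i.
Proof.
move=> iLs; congr (_ - _); apply: eq_bigr => j _.
by rewrite nth_rcons (leq_trans (ltn_ord j)).
Qed.

Lemma opt_prefix_rcons Ls : opt_prefix Ls -> uncovered Ls != set0 ->
  exists L, opt_prefix (rcons Ls L) /\ (#|uncovered (rcons Ls L)| < #|uncovered Ls|)%N.
Proof.
move=> [sLs dLs oLs] Un0.
have cU : block_closed P (uncovered Ls).
  apply: block_closedC; apply: block_closedU; first exact: gsparse_block_closed hL0.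
  by apply: block_closed_bigcup => j jLs; apply: gsparse_block_closed (sLs j jLs).1.
have [L /and3P [sL LU Ln0] minL] := greedy_choice (residual h L0 Ls (size Ls)) cU Un0.
have uncE : uncovered (rcons Ls L) = uncovered Ls :\: L.
  rewrite /uncovered size_rcons big_ord_recr /= bigcup_rcons // nth_rcons ltnn eqxx.
  by rewrite setUA setCU setDE.
have dL j : (j < size Ls)%N -> [disjoint L & nth set0 Ls j].
  move=> jLs; rewrite disjoint_subset; apply: subset_trans LU _.
  apply/subsetP => x; rewrite !inE negb_or => /andP [_]; apply: contra => xj.
  by apply/bigcupP; exists (Ordinal jLs).
exists L; split; last first.
  rewrite uncE cardsD (setIidPr LU); move: Ln0 (subset_leq_card LU).
  by rewrite -card_gt0 => Lgt0 LU'; rewrite ltn_subrL Lgt0 (leq_trans Lgt0 LU').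
split=> [i | i j | i]; rewrite size_rcons ?ltnS.
- rewrite leq_eqVlt => /orP [/eqP -> | iLs]; last by rewrite nth_rcons iLs; apply: sLs.
  rewrite nth_rcons ltnn eqxx; split=> //; apply: subset_trans LU _.
  by rewrite setCS subsetUl.
- move=> iLs jLs ij; move: iLs jLs; rewrite !nth_rcons.
  rewrite [(i <= _)%N]leq_eqVlt [(j <= _)%N]leq_eqVlt.
  case/orP => [/eqP iE | iLt] /orP [/eqP jE | jLt].
  + by case: ij; rewrite iE jE.
  + by rewrite iE ltnn eqxx jLt; apply: dL.
  + by rewrite jE ltnn eqxx iLt disjoint_sym; apply: dL.
  + by rewrite iLt jLt; apply: dLs.
- move=> iLs L' sL'; move: iLs; rewrite [(i <= _)%N]leq_eqVlt => /orP [/eqP -> | iLt].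
    rewrite residual_rcons // bigcup_rcons // nth_rcons ltnn eqxx.
    exact: minL.
  rewrite residual_rcons ?bigcup_rcons ?(ltnW iLt) // nth_rcons iLt.
  exact: oLs.
Qed.

Lemma opt_prefix_complete Ls : opt_prefix Ls -> uncovered Ls = set0 ->
  opt_decomp P k NA h L0 Ls.
Proof.
move=> [sLs dLs oLs] U0; split=> //; rewrite (big_nth set0) big_mkord.
apply/setP => x; apply/bigcupP/idP => [[i _ xi] | xL0].
  by have [_ /subsetP] := sLs i (ltn_ord i); apply.
have : x \notin uncovered Ls by rewrite U0 inE.
rewrite !inE negbK => /orP [xL0' | /bigcupP [i _ xi]]; last by exists i.
by move: xL0; rewrite inE xL0'.
Qed.

Lemma opt_decomp_exists : exists Ls, opt_decomp P k NA h L0 Ls.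
Proof.
suff : forall c Ls, (#|uncovered Ls| <= c)%N -> opt_prefix Ls ->
    exists Ls', opt_decomp P k NA h L0 Ls'.
  by move/(_ _ [::] (leqnn _)); apply; split.
elim=> [|c IH] Ls Uc oLs.
  by exists Ls; apply: opt_prefix_complete => //; apply/eqP; rewrite -cards_eq0; lia.
have [U0|Un0] := eqVneq (uncovered Ls) set0.
  by exists Ls; apply: opt_prefix_complete.
have [L [oLsL ULs]] := opt_prefix_rcons oLs Un0.
by apply: (IH (rcons Ls L)) => //; lia.
Qed.

End OptimalDecomposition.

Section GRIP.
Variables (R : realType) (n k m : nat) (P : {set {set 'I_n}}).
Variables (A : 'M[R]_(m, n)) (delta : R).
Hypothesis hGRIP : GRIP P (2 * k) A delta.

Lemma grip_dotp_ge (z : 'cV[R]_n) L1 L2 :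
  gsparse P k L1 -> gsparse P k L2 -> [disjoint L1 & L2] ->
  - delta * norm2 (restrict z L1) * norm2 (restrict z L2)
    <= dotp (A *m restrict z L1) (A *m restrict z L2).
Proof.
move=> sL1 sL2 d12; set u := restrict z L1; set v := restrict z L2.
have [->|u0] := eqVneq u 0; first by rewrite mulmx0 norm2_0 dotpC dotp0r mulr0 mul0r.
have [->|v0] := eqVneq v 0; first by rewrite mulmx0 norm2_0 dotp0r mulr0.
set U := norm2 u; set V := norm2 v.
have UV0 : 0 < U * V by rewrite mulr_gt0 ?norm2_gt0.
have sparse_comb s t : exists L, gsparse P (2 * k) L /\ supp (s *: u + t *: v) \subset L.
  exists (L1 :|: L2); split; first exact: gsparseU.
  apply/subsetP => i; rewrite !inE !mxE; apply: contraR; rewrite negb_or => /andP [i1 i2].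
  by rewrite (negbTE i1) (negbTE i2) !mulr0 addr0.
(* Polarization: V u + U v and V u - U v both have squared norm 2 U^2 V^2. *)
have [low _] := hGRIP (sparse_comb V U).
have [_ upp] := hGRIP (sparse_comb V (- U)).
have uv : dotp u v = 0 := dotp_restrict_disjoint z z d12.
rewrite !norm2_sq !mulmxDr -!scalemxAr in low upp.
rewrite !dotpDl !dotpDr !dotpZl !dotpZr uv (dotpC v u) uv in low upp.
rewrite (dotpC (A *m v) (A *m u)) -(norm2_sq u) -(norm2_sq v) -/U -/V in low upp.
rewrite -(ler_pM2l UV0); nra.
Qed.

Lemma grip_head_bound (h : 'cV[R]_n) L0 L1 (I : eqType) (r : seq I)
    (F : I -> {set 'I_n}) (eps : R) :
  0 <= delta -> gsparse P k L0 -> gsparse P k L1 -> [disjoint L0 & L1] ->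
  (forall j, j \in r ->
     [/\ gsparse P k (F j), [disjoint L0 & F j] & [disjoint L1 & F j]]) ->
  h = restrict h (L0 :|: L1) + \sum_(j <- r) restrict h (F j) ->
  norm2 (A *m h) <= 2 * eps ->
  (1 - delta) * norm2 (restrict h (L0 :|: L1)) <=
    2 * eps * Num.sqrt (1 + delta)
    + Num.sqrt 2 * delta * \sum_(j <- r) norm2 (restrict h (F j)).
Proof.
move=> dl0 sL0 sL1 d01 sF hE Ah.
set hT := restrict h (L0 :|: L1); set t := norm2 hT.
set S := \sum_(j <- r) norm2 (restrict h (F j)).
set u0 := norm2 (restrict h L0); set u1 := norm2 (restrict h L1).
have S0 : 0 <= S by apply: sumr_ge0 => j _; apply: norm2_ge0.
have eps0 : 0 <= eps by have := le_trans (norm2_ge0 _) Ah; lra.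
have [lowT uppT] := hGRIP (ex_intro _ _ (conj (gsparseU sL0 sL1) (supp_restrict h _))).
have AhT : norm2 (A *m hT) <= Num.sqrt (1 + delta) * t.
  rewrite -ler_sqr ?nnegrE ?mulr_ge0 ?sqrtr_ge0 ?norm2_ge0 //.
  by rewrite exprMn [Num.sqrt (1 + delta) ^+ 2]sqr_sqrtr ?addr_ge0.
have u01 : u0 + u1 <= Num.sqrt 2 * t.
  rewrite -ler_sqr ?nnegrE ?addr_ge0 ?mulr_ge0 ?sqrtr_ge0 ?norm2_ge0 //.
  rewrite exprMn [Num.sqrt 2 ^+ 2]sqr_sqrtr // norm2_restrictU // -/u0 -/u1.
  by have := sqr_ge0 (u0 - u1); rewrite sqrrB sqrrD; lra.
have cross : - delta * (u0 + u1) * S <=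
    \sum_(j <- r) dotp (A *m hT) (A *m restrict h (F j)).
  rewrite /S mulr_sumr big_seq [X in _ <= X]big_seq; apply: ler_sum => j jr.
  have [sFj d0j d1j] := sF j jr.
  rewrite /hT restrictU // mulmxDr dotpDl.
  have := lerD (grip_dotp_ge h sL0 sFj d0j) (grip_dotp_ge h sL1 sFj d1j).
  by rewrite -/u0 -/u1; lra.
have AhT_sq : norm2 (A *m hT) ^+ 2 = dotp (A *m hT) (A *m h)
    - \sum_(j <- r) dotp (A *m hT) (A *m restrict h (F j)).
  by rewrite norm2_sq {1}hE mulmxDr mulmx_sumr dotpDr dotp_sumr addrK.
have AhT_Ah : norm2 (A *m hT) * norm2 (A *m h) <= Num.sqrt (1 + delta) * t * (2 * eps).
  by apply: ler_pM; rewrite ?norm2_ge0.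
have cross' : delta * (u0 + u1) * S <= delta * (Num.sqrt 2 * t) * S.
  by rewrite ler_wpM2r // ler_wpM2l.
have CS := cauchy_schwarz (A *m hT) (A *m h).
(* (1 - delta) t^2 <= |A hT|^2 <= 2 eps sqrt(1 + delta) t + sqrt 2 delta t S;
   it remains to divide by t. *)
have [t0|tn0] := eqVneq t 0.
  by rewrite t0 mulr0 addr_ge0 ?mulr_ge0 ?sqrtr_ge0 ?mulr_ge0.
have t_gt0 : 0 < t by rewrite lt0r tn0 norm2_ge0.
rewrite -/t in lowT; rewrite -(ler_pM2l t_gt0); nra.
Qed.

End GRIP.

Lemma tube_constraint (R : realType) m n (A : 'M[R]_(m, n)) x xh eta y eps :
  y = A *m x + eta -> norm2 eta <= eps -> norm2 (y - A *m xh) <= eps ->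
  norm2 (A *m (xh - x)) <= 2 * eps.
Proof.
move=> -> eta_le xh_le.
have -> : A *m (xh - x) = eta - (A *m x + eta - A *m xh).
  by rewrite mulmxBr opprB [RHS]addrC -addrA opprD subrK.
apply: le_trans (ler_norm2D _ _) _; rewrite (is_normN (norm2_is_norm _ _)); lra.
Qed.

Section ConeConstraint.
Variables (R : realType) (n k : nat) (P : {set {set 'I_n}}).
Hypothesis hP : partition P [set: 'I_n].
Hypothesis hPk : forall B, B \in P -> (#|B| <= k)%N.
Variables (NA NP : 'cV[R]_n -> R) (gamma a b : R).
Hypotheses (hNA : is_norm NA) (hNP : is_norm NP) (hgamma : 0 < gamma).
Hypotheses (hdecA : decomposable P NA) (hdecP : gdecomposable P gamma NP).
Hypotheses (ha : is_min_ratio P k NP NA a) (hb : is_max_ratio P k NP NA b).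

Lemma cone_constraint (x xh : 'cV[R]_n) L0 : gsparse P k L0 -> NP xh <= NP x ->
  NA (restrict (xh - x) (~: L0)) <=
    b / (a * gamma) * NA (restrict (xh - x) L0)
    + b / (a * gamma) * (1 + gamma) * NA (restrict x (~: L0)).
Proof.
move=> sL0 xhx; have [S0 S0P L0E] := gsparse_cover sL0.
have a0 : 0 < a := min_ratio_gt0 hNP hNA ha.
have ag0 : 0 < a * gamma by rewrite mulr_gt0.
set r := b / (a * gamma).
have rag : r * (a * gamma) = b by rewrite divfK ?gt_eqF.
have rg1 : 1 <= r * gamma.
  rewrite -(ler_pM2l a0) mulr1 mulrCA rag.
  exact: min_ratio_le_max_ratio ha hb.
set h := xh - x; set sigma := NA (restrict x (~: L0)).
have split_xh : NP (restrict xh L0) + gamma * a * NA (restrict xh (~: L0)) <= NP xh.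
  rewrite L0E.
  exact (min_ratio_gdecomposable hNP hNA hP hPk xh ha (ltW hgamma) hdecP S0P).
have split_x : NP x <= NP (restrict xh L0) + NP (restrict h L0) + b * sigma.
  rewrite -{1}(restrict_addC x L0) -[restrict x L0](subKr (restrict xh L0)) -restrictB.
  apply: le_trans (is_normD hNP _ _) _; apply: lerD.
    by apply: le_trans (is_normD hNP _ _) _; rewrite is_normN.
  exact: max_ratio_le_decomposable hNP hNA hP hPk _ hb hdecA.
have h0 : NP (restrict h L0) <= b * NA (restrict h L0).
  exact: max_ratio_le_decomposable hNP hNA hP hPk _ hb hdecA.
have tri : NA (restrict h (~: L0)) <= NA (restrict xh (~: L0)) + sigma.
  by rewrite restrictB; apply: le_trans (is_normD hNA _ _) _; rewrite is_normN.
have xh_out : NA (restrict xh (~: L0)) <= r * NA (restrict h L0) + r * sigma.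
  rewrite -(ler_pM2l ag0).
  have -> : a * gamma * (r * NA (restrict h L0) + r * sigma) =
      b * NA (restrict h L0) + b * sigma by rewrite -rag; ring.
  lra.
have sigma0 : 0 <= sigma := is_norm_ge0 hNA _.
nra.
Qed.

End ConeConstraint.

Lemma recovery_error_bounds (R : realType) (t S sg e N0 Nt q s2 r d f g dl : R) :
  0 < f -> 0 <= r -> 0 <= d -> 0 <= sg -> 0 <= e -> 0 <= q -> 0 <= s2 ->
  0 <= dl -> 0 <= g -> dl < f / (f + s2 * r * d) ->
  (1 - dl) * t <= 2 * e * q + s2 * dl * S -> S <= f^-1 * Nt ->
  Nt <= r * N0 + r * (1 + g) * sg -> N0 <= d * t ->
  let Delta := 1 - (1 + s2 * r * d / f) * dl in
  let D1 := r * (1 + g) / f * ((1 + (s2 - 1) * dl) / Delta) in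
  let D2 := 2 * (1 + r * d / f) * (q / Delta) in
  let D3 := r * (1 + g) * ((1 + (s2 * d / f - 1) * dl) / Delta) in
  let D4 := 2 * d * (1 + r) * (q / Delta) in
  t + S <= D1 * sg + D2 * e /\ N0 + Nt <= D3 * sg + D4 * e.
Proof.
move=> f0 r0 d0 sg0 e0 q0 s20 dl0 g0 dlf head tail cone N0t Delta D1 D2 D3 D4.
set K := r * (1 + g) in cone *.
have K0 : 0 <= K by rewrite mulr_ge0 // addr_ge0.
have den0 : 0 < f + s2 * r * d by rewrite ltr_wpDr ?mulr_ge0.
have fD0 : 0 < f - (f + s2 * r * d) * dl.
  by rewrite subr_gt0 mulrC -ltr_pdivlMr.
have Delta0 : 0 < Delta.
  have -> : Delta = (f - (f + s2 * r * d) * dl) / f.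
    by rewrite /Delta; field; rewrite gt_eqF.
  exact: divr_gt0.
have Nt_t : Nt <= r * d * t + K * sg.
  by apply: le_trans cone _; rewrite lerD2r -mulrA ler_wpM2l.
have S_t : S <= r * d / f * t + K * sg / f.
  apply: le_trans tail _; rewrite [r * d / f * t]mulrAC -mulrDl mulrC.
  by rewrite ler_pM2r ?invr_gt0.
set X := 2 * e * q + s2 * dl * K * sg / f.
have tX : t <= X / Delta.
  rewrite ler_pdivlMr //.
  have := ler_wpM2l (mulr_ge0 s20 dl0) S_t; rewrite /Delta /X; lra.
have rdf0 : 0 <= 1 + r * d / f by rewrite addr_ge0 // divr_ge0 ?mulr_ge0 // ltW.
split.
- have -> : D1 * sg + D2 * e = (1 + r * d / f) * (X / Delta) + K * sg / f.
    by rewrite /D1 /D2 /X /K /Delta; field; rewrite !gt_eqF.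
  have := ler_wpM2l rdf0 tX; lra.
- have -> : D3 * sg + D4 * e = (1 + r) * (d * (X / Delta)) + K * sg.
    by rewrite /D3 /D4 /X /K /Delta; field; rewrite !gt_eqF.
  have := ler_wpM2l (addr_ge0 ler01 r0) (le_trans N0t (ler_wpM2l d0 tX)).
  have := ler_wpM2l r0 N0t; lra.
Qed.

Lemma opt_decomp_split (R : realType) n k (P : {set {set 'I_n}}) (NA : 'cV[R]_n -> R)
    (h : 'cV[R]_n) L0 Ls :
  opt_decomp P k NA h L0 Ls ->
  let L1 := nth set0 Ls 0 in
  [/\ gsparse P k L1, [disjoint L0 & L1],
      forall j, j \in index_iota 1 (size Ls) ->
        [/\ gsparse P k (nth set0 Ls j), [disjoint L0 & nth set0 Ls j]
          & [disjoint L1 & nth set0 Ls j]]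
    & h = restrict h (L0 :|: L1) + \sum_(1 <= j < size Ls) restrict h (nth set0 Ls j)].
Proof.
move=> [sLs dLs LsE _] L1.
have sLs' j : (j < size Ls)%N ->
    gsparse P k (nth set0 Ls j) /\ [disjoint L0 & nth set0 Ls j].
  by move=> /sLs [sj jL0]; rewrite disjoint_sym disjoints_subset.
have [sL1 d01] : gsparse P k L1 /\ [disjoint L0 & L1].
  case: (ltnP 0 (size Ls)) => [/sLs' // | s0].
  by rewrite /L1 nth_default // gsparse0 disjoints_subset setC0 subsetT.
split=> //.
- move=> j; rewrite mem_index_iota => /andP [j1 js].
  have [sj d0j] := sLs' j js; split=> //.
  by apply: dLs => //; [exact: leq_ltn_trans js | move=> j0; rewrite -j0 in j1].
- rewrite restrictU // -addrA -{1}(restrict_addC h L0); congr (_ + _).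
  rewrite -LsE (big_nth set0) big_mkord restrict_bigcup //.
  rewrite -(big_mkord xpredT (fun j => restrict h (nth set0 Ls j))).
  case: (ltnP 0 (size Ls)) => s0; first by rewrite big_ltn.
  by rewrite !big_geq ?(leq_trans s0) // /L1 nth_default // restrict_set0 addr0.
Qed.

Lemma sigma_idx_attained (R : realType) n k (P : {set {set 'I_n}})
    (NA : 'cV[R]_n -> R) (x : 'cV[R]_n) :
  exists2 L0, gsparse P k L0 & sigma_idx P k NA x = NA (restrict x (~: L0)).
Proof.
pose attained s := exists2 L0, gsparse P k L0 & s = NA (restrict x (~: L0)).
apply: (big_ind attained).
- by exists set0; rewrite ?gsparse0 // setC0 restrictT.
- move=> s1 s2 [L1 ? ->] [L2 ? ->]; rewrite /Order.min.
  by case: ifP => _; [exists L1 | exists L2].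
- by move=> L sL; exists L; rewrite // subr_restrict.
Qed.

Unset Implicit Arguments. Set Strict Implicit. Set Printing Implicit Defensive.

Theorem theorem4p1 (R : realType) (n m k : nat) (P : {set {set 'I_n}})
  (hP : partition P [set: 'I_n]) (hPk : forall B, B \in P -> (#|B| <= k)%N)
  (NA NP : 'cV[R]_n -> R) (gamma : R)
  (hNA : is_norm NA) (hNP : is_norm NP)
  (hgamma : 0 < gamma <= 1)
  (hdecA : decomposable P NA) (hdecP : gdecomposable P gamma NP)
  (a b c d : R)
  (ha : is_min_ratio P k NP NA a) (hb : is_max_ratio P k NP NA b)
  (hc : is_min_ratio P k NA (@norm2 R n) c)
  (hd : is_max_ratio P k NA (@norm2 R n) d)
  (f : R) (hf0 : 0 < f)
  (hf : forall (h : 'cV[R]_n) (L0 : {set 'I_n}) (Ls : seq {set 'I_n}),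
      gsparse P k L0 -> opt_decomp P k NA h L0 Ls ->
      \sum_(1 <= j < size Ls) norm2 (restrict h (nth set0 Ls j))
        <= f^-1 * NA (restrict h (~: L0)))
  (A : 'M[R]_(m, n)) (delta : R) (hdelta : 0 < delta < 1)
  (hGRIP : GRIP P (2 * k) A delta)
  (hcomp : delta < f / (f + Num.sqrt 2 * (b / (a * gamma)) * d))
  (x : 'cV[R]_n) (eta : 'cV[R]_m) (eps : R) (heta : norm2 eta <= eps)
  (y : 'cV[R]_m) (hy : y = A *m x + eta)
  (xh : 'cV[R]_n)
  (hxh_feas : norm2 (y - A *m xh) <= eps)
  (hxh_min : forall z : 'cV[R]_n, norm2 (y - A *m z) <= eps -> NP xh <= NP z) :
  let r := b / (a * gamma) in
  let sigma := sigma_idx P k NA x in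
  let Delta := 1 - (1 + Num.sqrt 2 * r * d / f) * delta in
  let D1 := r * (1 + gamma) / f * ((1 + (Num.sqrt 2 - 1) * delta) / Delta) in
  let D2 := 2 * (1 + r * d / f) * (Num.sqrt (1 + delta) / Delta) in
  let D3 := r * (1 + gamma) * ((1 + (Num.sqrt 2 * d / f - 1) * delta) / Delta) in
  let D4 := 2 * d * (1 + r) * (Num.sqrt (1 + delta) / Delta) in
  norm2 (xh - x) <= D1 * sigma + D2 * eps /\
  NA (xh - x) <= D3 * sigma + D4 * eps.
Proof.
move=> r sigma Delta D1 D2 D3 D4.
case/andP: hgamma => g0 _; case/andP: hdelta => dl0 _.
have a0 : 0 < a := min_ratio_gt0 hNP hNA ha.
have b0 : 0 < b := lt_le_trans a0 (min_ratio_le_max_ratio ha hb).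
have r0 : 0 <= r by rewrite divr_ge0 ?mulr_ge0 ?ltW.
have d0 : 0 < d := max_ratio_gt0 hNA (norm2_is_norm R n) hd.
have eps0 : 0 <= eps := le_trans (norm2_ge0 _) heta.
have [L0 sL0 sigmaE] := sigma_idx_attained k P NA x.
have sigma0 : 0 <= sigma by rewrite /sigma sigmaE is_norm_ge0.
set h := xh - x.
have [Ls opt] := opt_decomp_exists hP hPk hNA hdecA h sL0.
have [sL1 d01 sLj hE] := opt_decomp_split opt.
have head := grip_head_bound hGRIP (ltW dl0) sL0 sL1 d01 sLj hE
  (tube_constraint hy heta hxh_feas).
have x_feas : norm2 (y - A *m x) <= eps by rewrite hy addrAC subrr add0r.
have cone := cone_constraint hP hPk hNA hNP g0 hdecA hdecP ha hb sL0 (hxh_min x x_feas).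
rewrite -sigmaE -/r -/h in cone.
have h0 := le_trans (max_ratio_le hNA (norm2_is_norm R n) h hd sL0)
  (ler_wpM2l (ltW d0) (norm2_restrict_le h (subsetUl L0 (nth set0 Ls 0)))).
have [F1 F2] := recovery_error_bounds hf0 r0 (ltW d0) sigma0 eps0 (sqrtr_ge0 _)
  (sqrtr_ge0 _) (ltW dl0) (ltW g0) hcomp head (hf h L0 Ls sL0 opt) cone h0.
split.
- apply: le_trans F1; rewrite {1}hE; apply: le_trans (ler_norm2D _ _) _.
  by rewrite lerD2l (is_norm_sum (norm2_is_norm R n)).
- by apply: le_trans F2; rewrite -{1}(restrict_addC h L0) (is_normD hNA).
Qed.
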